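(* For every sequent $\Gamma\Rightarrow\Delta$: if $\mathsf{Grz_{Seq}}+\mathsf{cut}\vdash\Gamma\Rightarrow\Delta$, then $\mathsf{Grz_{Seq}}\vdash\Gamma\Rightarrow\Delta$.
   Context: Formulas are built from $\bot$ and atomic propositions using $\to$ and $\Box$. A sequent is $\Gamma\Rightarrow\Delta$ with $\Gamma,\Delta$ finite multisets of formulas; $\Box\Pi$ denotes the multiset $\{\Box B:B\in\Pi\}$. The (ordinary, finite-proof) sequent calculus $\mathsf{Grz_{Seq}}$ has initial sequents $\Gamma,A\Rightarrow A,\Delta$ (any formula $A$) and $\Gamma,\bot\Rightarrow\Delta$, and rules: $(\to_L)$ from $\Gamma,B\Rightarrow\Delta$ and $\Gamma\Rightarrow A,\Delta$ infer $\Gamma,A\to B\Rightarrow\Delta$; $(\to_R)$ from $\Gamma,A\Rightarrow B,\Delta$ infer $\Gamma\Rightarrow A\to B,\Delta$; $(\mathsf{refl})$ from $\Gamma,B,\Box B\Rightarrow\Delta$ infer $\Gamma,\Box B\Rightarrow\Delta$; $(\Box_{\mathsf{Grz}})$ from $\Box\Pi,\Box(A\to\Box A)\Rightarrow A$ infer $\Gamma,\Box\Pi\Rightarrow\Box A,\Delta$. The system $\mathsf{Grz_{Seq}}+\mathsf{cut}$ adds the rule $(\mathsf{cut})$: from $\Gamma\Rightarrow A,\Delta$ and $\Gamma,A\Rightarrow\Delta$ infer $\Gamma\Rightarrow\Delta$. Provability means existence of a finite derivation tree. *)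

From Stdlib Require Import List Permutation.
Import ListNotations.

Inductive form : Type :=
| Bot : form
| Atom : nat -> form
| Imp : form -> form -> form
| Box : form -> form.

(* A sequent Gamma => Delta with Gamma, Delta finite multisets, represented
   as lists; every rule below matches its conclusion (and is thus applicable)
   up to permutation of the lists, i.e. the lists are read as multisets. *)

Inductive derivable (cut_allowed : bool) : list form -> list form -> Prop :=
| d_init : forall G D G' D' A,
    Permutation G (A :: G') -> Permutation D (A :: D') ->
    derivable cut_allowed G D
| d_bot : forall G D G',
    Permutation G (Bot :: G') ->
    derivable cut_allowed G D
| d_impL : forall G D G' A B,
    Permutation G (Imp A B :: G') ->
    derivable cut_allowed (B :: G') D ->
    derivable cut_allowed G' (A :: D) ->
    derivable cut_allowed G D
| d_impR : forall G D D' A B,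
    Permutation D (Imp A B :: D') ->
    derivable cut_allowed (A :: G) (B :: D') ->
    derivable cut_allowed G D
| d_refl : forall G D G' B,
    Permutation G (Box B :: G') ->
    derivable cut_allowed (B :: Box B :: G') D ->
    derivable cut_allowed G D
| d_grz : forall G D G' D' Pi A,
    Permutation G (map Box Pi ++ G') ->
    Permutation D (Box A :: D') ->
    derivable cut_allowed (map Box Pi ++ [Box (Imp A (Box A))]) [A] ->
    derivable cut_allowed G D
| d_cut : forall G D A,
    cut_allowed = true ->
    derivable cut_allowed G (A :: D) ->
    derivable cut_allowed (A :: G) D ->
    derivable cut_allowed G D.

Definition GrzSeq_proves (G D : list form) : Prop := derivable false G D.
Definition GrzSeqCut_proves (G D : list form) : Prop := derivable true G D.

(* Cut is admissible because every rule, cut included, is sound for Grz frames (reflexive,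
   transitive, antisymmetric, with no infinite strictly ascending chain), while the cut-free
   calculus is complete for them.  For completeness, a cut-free underivable sequent extends,
   inside a finite subformula closure, to a saturated underivable one; these sequents, ordered
   by strict growth of their boxed antecedents, form a Grz frame in which each of them is
   refuted.  A succedent Box A is refuted either through Box (A -> Box A) in the antecedent, or
   by saturating the premise of the Grz rule, which adds that formula and hence gives a strictly
   larger world.  Treating sequents as sets needs admissible weakening and contraction, the
   latter resting on the invertibility of the implication rules. *)

From Stdlib Require Import List Permutation Arith Lia Classical.
Import ListNotations.

Lemma form_eq_dec (x y : form) : {x = y} + {x <> y}.
Proof. decide equality; apply Nat.eq_dec. Qed.

(* Decides permutation goals from permutation hypotheses by comparing multiplicities. *)
Ltac perm_solve :=
  repeat match goal with H : Permutation _ _ |- _ =>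
    rewrite (Permutation_count_occ form_eq_dec) in H end;
  apply (Permutation_count_occ form_eq_dec); let x := fresh "x" in intro x;
  repeat match goal with H : forall y : form, count_occ _ _ _ = _ |- _ => specialize (H x) end;
  repeat progress (rewrite ?count_occ_app in *; simpl in * );
  repeat (match goal with |- context [form_eq_dec ?a ?b] => destruct (form_eq_dec a b)
          | H : context [form_eq_dec ?a ?b] |- _ => destruct (form_eq_dec a b) end;
          simpl in * ); try subst; try congruence; try lia.

Lemma perm_head_in {A} (x : A) l l' : Permutation l (x :: l') -> In x l.
Proof. intros H. apply (Permutation_in _ (Permutation_sym H)), in_eq. Qed.

Lemma perm_tail_in {A} (x y : A) l l' : Permutation l (x :: l') -> In y l' -> In y l.
Proof. intros HP Hy. apply (Permutation_in _ (Permutation_sym HP)), in_cons, Hy. Qed.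

Lemma perm_in_tail {A} (x y : A) l l' : Permutation l (y :: l') -> In x l -> x <> y -> In x l'.
Proof. intros HP Hx Hxy. apply (Permutation_in _ HP) in Hx as [->|Hx]; tauto. Qed.

Lemma perm_dup_in {A} (x a : A) l l0 : Permutation l0 (a :: a :: l) -> In x l0 -> In x (a :: l).
Proof. intros HP Hx. apply (Permutation_in _ HP) in Hx as [<-|Hx]; [left|]; auto. Qed.

Lemma in_perm {A} (x : A) l : In x l -> exists l', Permutation l (x :: l').
Proof.
  intros H. apply in_split in H as (l1 & l2 & ->). exists (l1 ++ l2).
  apply Permutation_sym, Permutation_middle.
Qed.

Lemma perm_cons_neq {A} (a b : A) l l' : Permutation (a :: l) (b :: l') -> a <> b ->
  exists l0, Permutation l (b :: l0) /\ Permutation l' (a :: l0).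
Proof.
  intros HP Hab. destruct (perm_head_in b _ _ HP) as [->|Hb]; [congruence|].
  destruct (in_perm _ _ Hb) as [l0 Hl0]. exists l0. split; [exact Hl0|].
  apply Permutation_cons_inv with b. rewrite <- HP, Hl0. apply perm_swap.
Qed.

Lemma perm_cons_dup_neq {A} (a b : A) l l' : Permutation (a :: l) (b :: b :: l') -> a <> b ->
  exists l0, Permutation l (b :: b :: l0) /\ Permutation l' (a :: l0).
Proof.
  intros HP Hab. destruct (perm_cons_neq _ _ _ _ HP Hab) as (l1 & Hl & Hbl').
  destruct (perm_cons_neq _ _ _ _ (Permutation_sym Hbl') Hab) as (l0 & Hl1 & Hl').
  exists l0. split; [rewrite Hl, Hl1; reflexivity|exact Hl'].
Qed.

Lemma perm_app_in_r {A} (x : A) l L M : In x M -> Permutation (x :: l) (L ++ M) ->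
  exists M', Permutation M (x :: M') /\ Permutation l (L ++ M').
Proof.
  intros Hx HP. destruct (in_perm _ _ Hx) as [M' HM]. exists M'. split; [exact HM|].
  apply Permutation_cons_inv with x. rewrite HP, HM. apply Permutation_sym, Permutation_middle.
Qed.

Lemma perm_cons_map_Box_app X l Pi M : (forall b, X <> Box b) ->
  Permutation (X :: l) (map Box Pi ++ M) ->
  exists M', Permutation M (X :: M') /\ Permutation l (map Box Pi ++ M').
Proof.
  intros HX HP. apply perm_app_in_r; [|exact HP].
  assert (In X (map Box Pi ++ M)) as [(b & <- & _)%in_map_iff|]%in_app_or
    by apply (Permutation_in _ HP), in_eq; [exfalso; exact (HX b eq_refl)|assumption].
Qed.

Lemma perm_dup_box_split F G Pi G' : Permutation (F :: F :: G) (map Box Pi ++ G') ->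
  (exists G1, Permutation G' (F :: G1) /\ Permutation (F :: G) (map Box Pi ++ G1)) \/
  (exists b Pi2, F = Box b /\ Permutation Pi (b :: b :: Pi2) /\ Permutation G (map Box Pi2 ++ G')).
Proof.
  intros HP. destruct (in_dec form_eq_dec F G') as [HF|HF].
  - left. apply perm_app_in_r; [exact HF|]. perm_solve.
  - right.
    assert (HBox : forall L M, Permutation (F :: L) (map Box M ++ G') ->
              exists b M', F = Box b /\ Permutation M (b :: M')
                  /\ Permutation L (map Box M' ++ G')).
    { intros L M HLM. assert (In F (map Box M)) as (b & <- & Hb)%in_map_iff.
      { apply Permutation_sym, perm_head_in, in_app_or in HLM as [?|?]; tauto. }
      destruct (in_perm _ _ Hb) as [M' HM]. exists b, M'. split; [reflexivity|split; [exact HM|]].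
      apply (Permutation_map Box) in HM. simpl in HM. perm_solve. }
    destruct (HBox _ _ HP) as (b & Pi1 & -> & HPi1 & HG1).
    destruct (HBox _ _ HG1) as (b' & Pi2 & [= <-] & HPi2 & HG2).
    exists b, Pi2. split; [reflexivity|split; [|exact HG2]].
    rewrite HPi1, HPi2. reflexivity.
Qed.

(** * Structural rules *)

Section Structural.

Variable c : bool.

Lemma derivable_perm G D G2 D2 :
  derivable c G D -> Permutation G G2 -> Permutation D D2 -> derivable c G2 D2.
Proof.
  intros H. revert G2 D2. induction H; intros G2 D2 HG HD.
  - apply d_init with G' D' A; [rewrite <- HG|rewrite <- HD]; assumption.
  - apply d_bot with G'. rewrite <- HG. assumption.
  - apply d_impL with G' A B; [rewrite <- HG; assumption|auto|auto].
  - apply d_impR with D' A B; [rewrite <- HD; assumption|auto].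
  - apply d_refl with G' B; [rewrite <- HG; assumption|auto].
  - apply d_grz with G' D' Pi A; [rewrite <- HG|rewrite <- HD|]; assumption.
  - apply d_cut with A; auto.
Qed.

Lemma derivable_weaken G D G1 D1 : derivable c G D -> derivable c (G1 ++ G) (D1 ++ D).
Proof.
  intros H. revert G1 D1. induction H; intros G1 D1.
  - apply d_init with (G1 ++ G') (D1 ++ D') A; perm_solve.
  - apply d_bot with (G1 ++ G'); perm_solve.
  - apply d_impL with (G1 ++ G') A B; [perm_solve| |].
    + eapply derivable_perm; [apply (IHderivable1 G1 D1)| |]; perm_solve.
    + eapply derivable_perm; [apply (IHderivable2 G1 D1)| |]; perm_solve.
  - apply d_impR with (D1 ++ D') A B; [perm_solve|].
    eapply derivable_perm; [apply (IHderivable G1 D1)| |]; perm_solve.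
  - apply d_refl with (G1 ++ G') B; [perm_solve|].
    eapply derivable_perm; [apply (IHderivable G1 D1)| |]; perm_solve.
  - apply d_grz with (G1 ++ G') (D1 ++ D') Pi A; [perm_solve|perm_solve|assumption].
  - apply d_cut with A; [assumption| |].
    + eapply derivable_perm; [apply (IHderivable1 G1 D1)| |]; perm_solve.
    + eapply derivable_perm; [apply (IHderivable2 G1 D1)| |]; perm_solve.
Qed.

Lemma derivable_init_in G D A : In A G -> In A D -> derivable c G D.
Proof. intros (G' & HG)%in_perm (D' & HD)%in_perm. exact (d_init c G D G' D' A HG HD). Qed.

Lemma derivable_bot_in G D : In Bot G -> derivable c G D.
Proof. intros (G' & HG)%in_perm. exact (d_bot c G D G' HG). Qed.

Lemma derivable_impL_inv a b G D :
  derivable c (Imp a b :: G) D -> derivable c (b :: G) D /\ derivable c G (a :: D).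
Proof.
  enough (Hgen : forall G0 D, derivable c G0 D -> forall G, Permutation G0 (Imp a b :: G) ->
            derivable c (b :: G) D /\ derivable c G (a :: D)) by eauto.
  clear G D. intros G D H. induction H; intros E HE.
  - destruct (form_eq_dec A (Imp a b)) as [->|HA].
    + split; [apply d_impR with D' a b|apply d_impR with (a :: D') a b]; try perm_solve;
        [apply derivable_init_in with b|apply derivable_init_in with a]; simpl; auto.
    + assert (In A E) by eauto using perm_in_tail, perm_head_in.
      split; apply derivable_init_in with A; simpl; eauto using perm_head_in.
  - assert (In Bot E) by (apply (perm_in_tail _ _ _ _ HE); [eauto using perm_head_in|discriminate]).
    split; apply derivable_bot_in; simpl; auto.
  - destruct (form_eq_dec (Imp A B) (Imp a b)) as [[= -> ->]|HAB].
    + assert (HG' : Permutation G' E) by (apply Permutation_cons_inv with (Imp a b); perm_solve).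
      split; [eapply derivable_perm; [exact H0| |]
          |eapply derivable_perm; [exact H1| |]]; perm_solve.
    + destruct (perm_cons_neq (Imp A B) (Imp a b) G' E) as (l0 & Hl0 & HEl0);
        [perm_solve|assumption|].
      destruct (IHderivable1 (B :: l0)) as [I1 I2]; [perm_solve|].
      destruct (IHderivable2 l0 Hl0) as [I3 I4].
      split; [apply d_impL with (b :: l0) A B|apply d_impL with l0 A B];
          try perm_solve; try assumption.
      * eapply derivable_perm; [exact I1| |]; perm_solve.
      * eapply derivable_perm; [exact I4| |]; perm_solve.
  - destruct (IHderivable (A :: E)) as [I1 I2]; [perm_solve|].
    split; [apply d_impR with D' A B|apply d_impR with (a :: D') A B]; try perm_solve.
    + eapply derivable_perm; [exact I1| |]; perm_solve.
    + eapply derivable_perm; [exact I2| |]; perm_solve.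
  - destruct (perm_cons_neq (Box B) (Imp a b) G' E) as (l0 & Hl0 & HEl0);
      [perm_solve|discriminate|].
    destruct (IHderivable (B :: Box B :: l0)) as [I1 I2]; [perm_solve|].
    split; [apply d_refl with (b :: l0) B|apply d_refl with l0 B]; try perm_solve; try assumption.
    eapply derivable_perm; [exact I1| |]; perm_solve.
  - destruct (perm_cons_map_Box_app (Imp a b) E Pi G') as (G1 & HG' & HE1);
      [discriminate|perm_solve|].
    split; [apply d_grz with (b :: G1) D' Pi A|apply d_grz with G1 (a :: D') Pi A];
      solve [perm_solve|assumption].
  - destruct (IHderivable1 E HE) as [I1 I2].
      destruct (IHderivable2 (A :: E)) as [I3 I4]; [perm_solve|].
    split; apply d_cut with A; try assumption.
    + eapply derivable_perm; [exact I3| |]; perm_solve.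
    + eapply derivable_perm; [exact I2| |]; perm_solve.
Qed.

Lemma derivable_impR_inv a b G D :
  derivable c G (Imp a b :: D) -> derivable c (a :: G) (b :: D).
Proof.
  enough (Hgen : forall G D0, derivable c G D0 -> forall D, Permutation D0 (Imp a b :: D) ->
            derivable c (a :: G) (b :: D)) by eauto.
  clear G D. intros G D H. induction H; intros E HE.
  - destruct (form_eq_dec A (Imp a b)) as [->|HA].
    + apply d_impL with (a :: G') a b; [perm_solve| |];
        [apply derivable_init_in with b|apply derivable_init_in with a]; simpl; auto.
    + assert (In A E) by eauto using perm_in_tail, perm_head_in.
      apply derivable_init_in with A; simpl; eauto using perm_head_in.
  - apply derivable_bot_in. right. eauto using perm_head_in.
  - apply d_impL with (a :: G') A B; [perm_solve| |].
    + eapply derivable_perm; [apply (IHderivable1 E HE)| |]; perm_solve.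
    + eapply derivable_perm; [apply (IHderivable2 (A :: E))| |]; perm_solve.
  - destruct (form_eq_dec (Imp A B) (Imp a b)) as [[= -> ->]|HAB].
    + assert (HD' : Permutation D' E) by (apply Permutation_cons_inv with (Imp a b); perm_solve).
      eapply derivable_perm; [exact H0| |]; perm_solve.
    + destruct (perm_cons_neq (Imp A B) (Imp a b) D' E) as (l0 & Hl0 & HEl0);
        [perm_solve|assumption|].
      apply d_impR with (b :: l0) A B; [perm_solve|].
      eapply derivable_perm; [apply (IHderivable (B :: l0))| |]; perm_solve.
  - apply d_refl with (a :: G') B; [perm_solve|].
    eapply derivable_perm; [apply (IHderivable E HE)| |]; perm_solve.
  - assert (HA : In (Box A) E)
      by (apply (perm_in_tail _ _ _ _ HE); [eauto using perm_head_in|discriminate]).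
    destruct (in_perm _ _ HA) as [D1 HD1].
    apply d_grz with (a :: G') (b :: D1) Pi A; [perm_solve|perm_solve|assumption].
  - apply d_cut with A; [assumption| |].
    + eapply derivable_perm; [apply (IHderivable1 (A :: E))| |]; perm_solve.
    + eapply derivable_perm; [apply (IHderivable2 E HE)| |]; perm_solve.
Qed.

Definition contractible_l (F : form) : Prop :=
  forall G D, derivable c (F :: F :: G) D -> derivable c (F :: G) D.

Definition contractible_r (F : form) : Prop :=
  forall G D, derivable c G (F :: F :: D) -> derivable c G (F :: D).

Lemma contractible_l_of F :
  (forall A B, F = Imp A B -> contractible_l B /\ contractible_r A) -> contractible_l F.
Proof.
  intros HF G0 D0 H0.
  enough (Hgen : forall G D, derivable c G D -> forall E, Permutation G (F :: F :: E) ->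
            derivable c (F :: E) D) by eauto.
  clear G0 D0 H0. intros G D H. induction H; intros E HE.
  - apply derivable_init_in with A; eauto using perm_dup_in, perm_head_in.
  - apply derivable_bot_in; eauto using perm_dup_in, perm_head_in.
  - destruct (form_eq_dec (Imp A B) F) as [<-|HAB].
    + destruct (HF A B eq_refl) as [HB HA].
      assert (HG' : Permutation G' (Imp A B :: E))
          by (apply Permutation_cons_inv with (Imp A B); perm_solve).
      apply d_impL with E A B; [reflexivity| |].
      * apply HB, (derivable_impL_inv A B).
        eapply derivable_perm; [exact H0| |]; perm_solve.
      * apply HA, (derivable_impL_inv A B).
        eapply derivable_perm; [exact H1| |]; perm_solve.
    + destruct (perm_cons_dup_neq (Imp A B) F G' E) as (l0 & Hl0 & HEl0); [perm_solve|assumption|].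
      apply d_impL with (F :: l0) A B; [perm_solve| |].
      * eapply derivable_perm; [apply (IHderivable1 (B :: l0))| |]; perm_solve.
      * apply IHderivable2, Hl0.
  - apply d_impR with D' A B; [assumption|].
    eapply derivable_perm; [apply (IHderivable (A :: E))| |]; perm_solve.
  - destruct (form_eq_dec (Box B) F) as [<-|HB].
    + apply d_refl with E B; [reflexivity|].
      eapply derivable_perm; [apply (IHderivable (B :: E))| |]; perm_solve.
    + destruct (perm_cons_dup_neq (Box B) F G' E) as (l0 & Hl0 & HEl0); [perm_solve|assumption|].
      apply d_refl with (F :: l0) B; [perm_solve|].
      eapply derivable_perm; [apply (IHderivable (B :: Box B :: l0))| |]; perm_solve.
  - destruct (perm_dup_box_split F E Pi G') as [(G1 & HG' & HE1)|(b & Pi2 & -> & HPi & HE2)];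
      [perm_solve| |].
    + apply d_grz with G1 D' Pi A; assumption.
    + apply (Permutation_map Box) in HPi. simpl in HPi.
      apply d_grz with G' D' (b :: Pi2) A; [perm_solve|assumption|].
      apply (IHderivable (map Box Pi2 ++ [Box (Imp A (Box A))])). perm_solve.
  - apply d_cut with A; [assumption|apply IHderivable1, HE|].
    eapply derivable_perm; [apply (IHderivable2 (A :: E))| |]; perm_solve.
Qed.

Lemma contractible_r_of F :
  (forall A B, F = Imp A B -> contractible_l A /\ contractible_r B) -> contractible_r F.
Proof.
  intros HF G0 D0 H0.
  enough (Hgen : forall G D, derivable c G D -> forall E, Permutation D (F :: F :: E) ->
            derivable c G (F :: E)) by eauto.
  clear G0 D0 H0. intros G D H. induction H; intros E HE.
  - apply derivable_init_in with A; eauto using perm_dup_in, perm_head_in.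
  - apply d_bot with G'. assumption.
  - apply d_impL with G' A B; [assumption|apply IHderivable1, HE|].
    eapply derivable_perm; [apply (IHderivable2 (A :: E))| |]; perm_solve.
  - destruct (form_eq_dec (Imp A B) F) as [<-|HAB].
    + destruct (HF A B eq_refl) as [HA HB].
      apply d_impR with E A B; [reflexivity|].
      apply HB, HA, (derivable_impR_inv A B).
      eapply derivable_perm; [exact H0| |]; perm_solve.
    + destruct (perm_cons_dup_neq (Imp A B) F D' E) as (l0 & Hl0 & HEl0); [perm_solve|assumption|].
      apply d_impR with (F :: l0) A B; [perm_solve|].
      eapply derivable_perm; [apply (IHderivable (B :: l0))| |]; perm_solve.
  - apply d_refl with G' B; [assumption|apply IHderivable, HE].
  - assert (HA : In (Box A) (F :: E)) by eauto using perm_dup_in, perm_head_in.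
    destruct (in_perm _ _ HA) as [D1 HD1].
    apply d_grz with G' D1 Pi A; assumption.
  - apply d_cut with A; [assumption| |apply IHderivable2, HE].
    eapply derivable_perm; [apply (IHderivable1 (A :: E))| |]; perm_solve.
Qed.

Lemma contractible F : contractible_l F /\ contractible_r F.
Proof.
  induction F; split; (apply contractible_l_of || apply contractible_r_of);
    intros A B [= <- <-]; tauto.
Qed.

Lemma derivable_contract_l L G D : incl L G -> derivable c (L ++ G) D -> derivable c G D.
Proof.
  induction L as [|a L IH]; simpl; intros HL H; [assumption|].
  apply incl_cons_inv in HL as [Ha HL]. apply IH; [assumption|].
  destruct (in_perm _ _ Ha) as [G1 HG1].
  apply derivable_perm with (a :: L ++ G1) D; [|perm_solve|reflexivity].
  apply (proj1 (contractible a)). eapply derivable_perm; [exact H| |]; perm_solve.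
Qed.

Lemma derivable_contract_r L G D : incl L D -> derivable c G (L ++ D) -> derivable c G D.
Proof.
  induction L as [|a L IH]; simpl; intros HL H; [assumption|].
  apply incl_cons_inv in HL as [Ha HL]. apply IH; [assumption|].
  destruct (in_perm _ _ Ha) as [D1 HD1].
  apply derivable_perm with G (a :: L ++ D1); [|reflexivity|perm_solve].
  apply (proj2 (contractible a)). eapply derivable_perm; [exact H| |]; perm_solve.
Qed.

Lemma derivable_incl G D G' D' : incl G G' -> incl D D' -> derivable c G D -> derivable c G' D'.
Proof.
  intros HG HD H. apply derivable_contract_l with G; [assumption|].
  apply derivable_contract_r with D; [assumption|].
  apply derivable_perm with (G' ++ G) (D' ++ D); [apply derivable_weaken, H| |];
    apply Permutation_app_comm.
Qed.

Lemma derivable_impL_in G D A B :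
  In (Imp A B) G -> derivable c (B :: G) D -> derivable c G (A :: D) -> derivable c G D.
Proof.
  intros HAB HB HA. apply derivable_incl with (Imp A B :: G) D; [|apply incl_refl|].
  - intros x [<-|Hx]; assumption.
  - apply d_impL with G A B; [reflexivity|assumption|assumption].
Qed.

Lemma derivable_impR_in G D A B :
  In (Imp A B) D -> derivable c (A :: G) (B :: D) -> derivable c G D.
Proof.
  intros HAB H. apply derivable_incl with G (Imp A B :: D); [apply incl_refl| |].
  - intros x [<-|Hx]; assumption.
  - apply d_impR with D A B; [reflexivity|assumption].
Qed.

Lemma derivable_refl_in G D B : In (Box B) G -> derivable c (B :: G) D -> derivable c G D.
Proof.
  intros HB H. apply derivable_incl with (Box B :: G) D; [|apply incl_refl|].
  - intros x [<-|Hx]; assumption.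
  - apply d_refl with G B; [reflexivity|].
    apply derivable_incl with (B :: G) D; [|apply incl_refl|assumption].
    intros x [<-|Hx]; simpl; auto.
Qed.

Lemma derivable_grz_in G D Pi A :
  incl (map Box Pi) G -> In (Box A) D ->
  derivable c (map Box Pi ++ [Box (Imp A (Box A))]) [A] -> derivable c G D.
Proof.
  intros HPi HA H. apply derivable_incl with (map Box Pi ++ G) (Box A :: D).
  - apply incl_app; [assumption|apply incl_refl].
  - intros x [<-|Hx]; assumption.
  - apply d_grz with G D Pi A; [reflexivity|reflexivity|assumption].
Qed.

End Structural.

(** * Soundness *)

Fixpoint sat {W : Type} (R : W -> W -> Prop) (V : W -> nat -> Prop) (w : W) (F : form) : Prop :=
  match F with
  | Bot => False
  | Atom p => V w p
  | Imp A B => sat R V w A -> sat R V w B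
  | Box A => forall v, R w v -> sat R V v A
  end.

Record grz_frame {W : Type} (R : W -> W -> Prop) : Prop := {
  frame_refl : forall w, R w w;
  frame_trans : forall u v w, R u v -> R v w -> R u w;
  frame_antisym : forall u v, R u v -> R v u -> u = v;
  frame_wf : well_founded (fun v u => R u v /\ v <> u) }.

Definition valid (G D : list form) : Prop :=
  forall (W : Type) (R : W -> W -> Prop) (V : W -> nat -> Prop), grz_frame R ->
  forall w, (forall F, In F G -> sat R V w F) -> exists F, In F D /\ sat R V w F.

Section GrzFrame.

Variables (W : Type) (R : W -> W -> Prop) (V : W -> nat -> Prop).
Hypothesis HR : grz_frame R.

Lemma maximal_refuter w v A : R w v -> ~ sat R V v A ->
  exists u, R w u /\ ~ sat R V u A /\ (forall t, R u t -> t <> u -> sat R V t A).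
Proof.
  induction v as [v IH] using (well_founded_ind (frame_wf _ HR)). intros Hwv Hv.
  destruct (classic (exists t, R v t /\ t <> v /\ ~ sat R V t A)) as [(t & Hvt & Htv & Ht)|Hno].
  - apply (IH t); [split|apply (frame_trans _ HR) with v|]; assumption.
  - exists v. split; [|split]; [assumption|assumption|].
    intros t Hvt Htv. apply NNPP. intros Ht. apply Hno. exists t. auto.
Qed.

(* At a last world above w refuting A, A holds at every strict successor, so Box (A -> Box A)
   holds there and the premise of the Grz rule is refuted. *)
Lemma sat_box_of_grz_premise Pi A w :
  (forall u, (forall B, In B Pi -> sat R V u (Box B)) -> sat R V u (Box (Imp A (Box A))) ->
     sat R V u A) ->
  (forall B, In B Pi -> sat R V w (Box B)) -> sat R V w (Box A).
Proof.
  intros Hprem Hw v Hwv. apply NNPP. intros Hv.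
  destruct (maximal_refuter w v A Hwv Hv) as (u & Hwu & Hu & Hmax).
  apply Hu, Hprem.
  - intros B HB t Hut. apply (Hw B HB), (frame_trans _ HR) with u; assumption.
  - intros t Hut HtA s Hts. destruct (classic (s = u)) as [->|Hsu].
    + rewrite <- ((frame_antisym _ HR) u t Hut Hts) in HtA. contradiction.
    + apply Hmax; [apply (frame_trans _ HR) with t|]; assumption.
Qed.

End GrzFrame.

Lemma derivable_valid c G D : derivable c G D -> valid G D.
Proof.
  induction 1; intros W R V HR w Hw.
  - exists A. split; [apply (perm_head_in _ _ _ H0)|apply Hw, (perm_head_in _ _ _ H)].
  - exfalso. apply (Hw Bot), (perm_head_in _ _ _ H).
  - assert (HG' : forall F, In F G' -> sat R V w F) by eauto using perm_tail_in.
    destruct (IHderivable2 W R V HR w HG') as (F & [<-|HF] & HFw); [|eauto].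
    apply (IHderivable1 W R V HR w). intros X [<-|HX]; [|auto].
    apply (Hw _ (perm_head_in _ _ _ H)), HFw.
  - assert (HAB : In (Imp A B) D) by apply (perm_head_in _ _ _ H).
    destruct (classic (sat R V w A)) as [HA|HA]; [|exists (Imp A B); simpl; tauto].
    destruct (IHderivable W R V HR w) as (F & [<-|HF] & HFw).
    + intros X [<-|HX]; auto.
    + exists (Imp A B). simpl. auto.
    + exists F. eauto using perm_tail_in.
  - apply (IHderivable W R V HR w). intros X [<-|[<-|HX]].
    + apply (Hw _ (perm_head_in _ _ _ H)), (frame_refl _ HR).
    + apply Hw, (perm_head_in _ _ _ H).
    + eauto using perm_tail_in.
  - exists (Box A). split; [apply (perm_head_in _ _ _ H0)|].
    apply sat_box_of_grz_premise with Pi; [assumption| |].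
    + intros u HPi Hgrz. destruct (IHderivable W R V HR u) as (F & [<-|[]] & HF); [|assumption].
      intros X [(B & <- & HB)%in_map_iff|[<-|[]]]%in_app_or; auto.
    + intros B HB. apply Hw, (Permutation_in _ (Permutation_sym H)), in_or_app. left.
      apply in_map, HB.
  - destruct (classic (sat R V w A)) as [HA|HA].
    + apply (IHderivable2 W R V HR w). intros X [<-|HX]; auto.
    + destruct (IHderivable1 W R V HR w Hw) as (F & [<-|HF] & HFw); [contradiction|eauto].
Qed.

(** * Completeness of the cut-free calculus *)

Fixpoint subformulas (F : form) : list form :=
  F :: match F with
       | Imp A B => subformulas A ++ subformulas B
       | Box A => subformulas A
       | _ => []
       end.

Lemma subformulas_refl F : In F (subformulas F).
Proof. destruct F; left; reflexivity. Qed.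

Lemma subformulas_trans F X : In X (subformulas F) -> incl (subformulas X) (subformulas F).
Proof.
  induction F; simpl; intros [<-|HX]; try apply incl_refl; try contradiction.
  - apply in_app_or in HX as [HX|HX]; apply incl_tl; [apply incl_appl|apply incl_appr]; auto.
  - apply incl_tl; auto.
Qed.

Definition grz_formulas (F : form) : list form :=
  match F with Box A => [Imp A (Box A); Box (Imp A (Box A))] | _ => [] end.

(* [Sub] bounds the succedents and [Cl] the antecedents of the sequents met in the countermodel
   construction; [Cl] also contains the formulas introduced by the premise of the Grz rule. *)
Record closure (Sub Cl : list form) : Prop := {
  closure_incl : incl Sub Cl;
  closure_imp : forall A B, In (Imp A B) Cl -> In A Sub /\ In B Cl;
  closure_box : forall A, In (Box A) Cl -> In A Cl;
  closure_sub_imp : forall A B, In (Imp A B) Sub -> In A Sub /\ In B Sub;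
  closure_sub_box : forall A, In (Box A) Sub -> In A Sub /\ In (Box (Imp A (Box A))) Cl }.

Lemma closure_of L : let Sub := flat_map subformulas L in
  closure Sub (Sub ++ flat_map grz_formulas Sub).
Proof.
  intros Sub.
  assert (Hsub : forall X Y, In X Sub -> In Y (subformulas X) -> In Y Sub).
  { intros X Y (F & HF & HX)%in_flat_map HY. apply in_flat_map. exists F.
    split; [assumption|apply (subformulas_trans F X HX), HY]. }
  assert (Hgrz : forall Y, In Y (flat_map grz_formulas Sub) ->
            exists A, In (Box A) Sub /\ (Y = Imp A (Box A) \/ Y = Box (Imp A (Box A)))).
  { intros Y (X & HX & HY)%in_flat_map. destruct X; simpl in HY; try contradiction.
    exists X. split; [assumption|]. destruct HY as [<-|[<-|[]]]; auto. }
  assert (Hgrz_in : forall A, In (Box A) Sub ->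
      incl (grz_formulas (Box A)) (flat_map grz_formulas Sub)).
  { intros A HA Y HY. apply in_flat_map. eauto. }
  constructor.
  - apply incl_appl, incl_refl.
  - intros A B [HAB|(A' & HA' & [[= -> ->]|?])%Hgrz]%in_app_or; [|split|discriminate].
    + split; [|apply in_or_app; left];
        apply Hsub with (Imp A B); simpl; auto using in_or_app, subformulas_refl.
    + apply Hsub with (Box A'); simpl; auto using subformulas_refl.
    + apply in_or_app. left. assumption.
  - intros A [HA|(A' & HA' & [?|[= ->]])%Hgrz]%in_app_or; [|discriminate|].
    + apply in_or_app. left. apply Hsub with (Box A); simpl; auto using subformulas_refl.
    + apply in_or_app. right. apply (Hgrz_in A' HA'). simpl. auto.
  - intros A B HAB. split; apply Hsub with (Imp A B); simpl; auto using in_or_app, subformulas_refl.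
  - intros A HA. split; [apply Hsub with (Box A); simpl; auto using subformulas_refl|].
    apply in_or_app. right. apply (Hgrz_in A HA). simpl. auto.
Qed.

Definition count_in (L X : list form) : nat :=
  length (filter (fun F => if in_dec form_eq_dec F X then true else false) L).

Lemma count_in_le_length L X : count_in L X <= length L.
Proof. apply filter_length_le. Qed.

Lemma count_in_le L X Y : (forall x, In x L -> In x X -> In x Y) -> count_in L X <= count_in L Y.
Proof.
  unfold count_in. induction L as [|a L IH]; simpl; intros H; [lia|].
  specialize (IH (fun x Hx => H x (or_intror Hx))).
  destruct (in_dec form_eq_dec a X) as [HX|HX], (in_dec form_eq_dec a Y) as [HY|HY];
    simpl; try lia. exfalso. exact (HY (H a (or_introl eq_refl) HX)).
Qed.

Lemma count_in_lt L X Y a : (forall x, In x L -> In x X -> In x Y) ->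
  In a L -> ~ In a X -> In a Y -> count_in L X < count_in L Y.
Proof.
  unfold count_in. induction L as [|b L IH]; simpl; intros H Ha HaX HaY; [contradiction|].
  pose proof (count_in_le L X Y (fun x Hx => H x (or_intror Hx))) as Hle. unfold count_in in Hle.
  destruct Ha as [->|Ha].
  - destruct (in_dec form_eq_dec a X); [contradiction|].
    destruct (in_dec form_eq_dec a Y); [simpl; lia|contradiction].
  - specialize (IH (fun x Hx => H x (or_intror Hx)) Ha HaX HaY).
    destruct (in_dec form_eq_dec b X) as [HX|HX], (in_dec form_eq_dec b Y) as [HY|HY];
      simpl; try lia. exfalso. exact (HY (H b (or_introl eq_refl) HX)).
Qed.

Definition unbox (L : list form) : list form :=
  flat_map (fun F => match F with Box B => [B] | _ => [] end) L.

Lemma in_unbox L B : In B (unbox L) <-> In (Box B) L.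
Proof.
  unfold unbox. rewrite in_flat_map. split.
  - intros ([] & HF & HB); simpl in HB; try contradiction.
    destruct HB as [<-|[]]. assumption.
  - intros H. exists (Box B). simpl. auto.
Qed.

Definition is_box (F : form) : bool := match F with Box _ => true | _ => false end.

Section Canonical.

Variables Sub Cl : list form.
Hypothesis HC : closure Sub Cl.

Record saturated (G D : list form) : Prop := {
  saturated_impL : forall A B, In (Imp A B) G -> In B G \/ In A D;
  saturated_impR : forall A B, In (Imp A B) D -> In A G /\ In B D;
  saturated_refl : forall B, In (Box B) G -> In B G }.

Definition world : Type := list form * list form.

Record good (w : world) : Prop := {
  good_ante : incl (fst w) Cl;
  good_succ : incl (snd w) Sub;
  good_underivable : ~ GrzSeq_proves (fst w) (snd w);
  good_saturated : saturated (fst w) (snd w) }.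

Lemma saturated_of_maximal G D :
  incl G Cl -> incl D Sub -> ~ GrzSeq_proves G D ->
  (forall x, In x Cl -> ~ In x G -> GrzSeq_proves (x :: G) D) ->
  (forall x, In x Sub -> ~ In x D -> GrzSeq_proves G (x :: D)) ->
  saturated G D.
Proof.
  intros HG HD HN HmaxG HmaxD. constructor.
  - intros A B HAB. destruct (closure_imp _ _ HC A B (HG _ HAB)) as [HA HB].
    destruct (in_dec form_eq_dec B G) as [|HBG]; [left; assumption|].
    destruct (in_dec form_eq_dec A D) as [|HAD]; [right; assumption|].
    exfalso. apply HN, derivable_impL_in with A B; [|apply HmaxG|apply HmaxD]; assumption.
  - intros A B HAB. destruct (closure_sub_imp _ _ HC A B (HD _ HAB)) as [HA HB].
    assert (Hprem : ~ GrzSeq_proves (A :: G) (B :: D))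
      by (intros H; apply HN, derivable_impR_in with A B; assumption).
    split.
    + destruct (in_dec form_eq_dec A G) as [|HAG]; [assumption|].
      exfalso. apply Hprem, derivable_incl with (A :: G) D; auto using incl_tl, incl_refl.
      apply HmaxG; [apply (closure_incl _ _ HC)|]; assumption.
    + destruct (in_dec form_eq_dec B D) as [|HBD]; [assumption|].
      exfalso. apply Hprem, derivable_incl with G (B :: D); auto using incl_tl, incl_refl.
      apply HmaxD; assumption.
  - intros B HB. destruct (in_dec form_eq_dec B G) as [|HBG]; [assumption|].
    exfalso. apply HN, derivable_refl_in with B; [assumption|].
    apply HmaxG; [apply (closure_box _ _ HC), HG|]; assumption.
Qed.

Lemma saturation G D : incl G Cl -> incl D Sub -> ~ GrzSeq_proves G D ->
  exists G' D', incl G G' /\ incl D D' /\ good (G', D').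
Proof.
  enough (Hfuel : forall k G D, length Cl + length Sub < k + count_in Cl G + count_in Sub D ->
            incl G Cl -> incl D Sub -> ~ GrzSeq_proves G D ->
            exists G' D', incl G G' /\ incl D D' /\ good (G', D'))
    by (intros; apply Hfuel with (S (length Cl + length Sub)); [lia|assumption..]).
  clear G D. induction k as [|k IH]; intros G D Hk HG HD HN.
  { pose proof (count_in_le_length Cl G). pose proof (count_in_le_length Sub D). lia. }
  destruct (classic (exists x, In x Cl /\ ~ In x G /\ ~ GrzSeq_proves (x :: G) D))
    as [(x & Hx & HxG & HNx)|HmaxG].
  { assert (count_in Cl G < count_in Cl (x :: G))
      by (apply count_in_lt with x; simpl; auto).
    destruct (IH (x :: G) D) as (G' & D' & HGG' & HDD' & Hgood);
        [lia|auto using incl_cons|auto|auto|].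
    exists G', D'. eauto using incl_tran, incl_tl, incl_refl. }
  destruct (classic (exists x, In x Sub /\ ~ In x D /\ ~ GrzSeq_proves G (x :: D)))
    as [(x & Hx & HxD & HNx)|HmaxD].
  { assert (count_in Sub D < count_in Sub (x :: D))
      by (apply count_in_lt with x; simpl; auto).
    destruct (IH G (x :: D)) as (G' & D' & HGG' & HDD' & Hgood);
        [lia|auto|auto using incl_cons|auto|].
    exists G', D'. eauto using incl_tran, incl_tl, incl_refl. }
  exists G, D. split; [apply incl_refl|split; [apply incl_refl|]].
  constructor; simpl; try assumption.
  apply saturated_of_maximal; try assumption; intros x Hx HxN; apply NNPP; intros HNx;
    [apply HmaxG|apply HmaxD]; eauto.
Qed.

Definition canonical_rel (w v : world) : Prop :=
  w = v \/
  (good v /\ (forall F, In (Box F) (fst w) -> In (Box F) (fst v)) /\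
   exists F, In (Box F) (fst v) /\ ~ In (Box F) (fst w)).

Definition canonical_val (w : world) (p : nat) : Prop := In (Atom p) (fst w).

Lemma canonical_frame : grz_frame canonical_rel.
Proof.
  constructor.
  - intros w. left. reflexivity.
  - intros u v w [<-|(Hv & Huv & F & HFv & HFu)] Hvw; [assumption|right].
    destruct Hvw as [<-|(Hw & Hvw & _)]; [split; [assumption|split; [assumption|eauto]]|].
    split; [assumption|split; [auto|exists F; auto]].
  - intros u v [->|(_ & _ & F & HFv & HFu)] Hvu; [reflexivity|].
    destruct Hvu as [->|(_ & Hvu & _)]; [reflexivity|]. exfalso. auto.
  - apply (well_founded_lt_compat _ (fun u => length Cl - count_in Cl (filter is_box (fst u)))).
    intros v u [[->|(Hv & Huv & F & HFv & HFu)] Hne]; [contradiction|].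
    assert (count_in Cl (filter is_box (fst u)) < count_in Cl (filter is_box (fst v))).
    { apply count_in_lt with (Box F).
      - intros x _; rewrite !filter_In; intros [Hx Hb]; split; [|exact Hb].
        destruct x; try discriminate. auto.
      - apply (good_ante _ Hv), HFv.
      - rewrite filter_In. tauto.
      - rewrite filter_In. auto. }
    pose proof (count_in_le_length Cl (filter is_box (fst v))). lia.
Qed.

Lemma grz_successor G D A : good (G, D) -> In (Box A) D -> ~ In (Box (Imp A (Box A))) G ->
  exists v, good v /\ canonical_rel (G, D) v /\ In A (snd v).
Proof.
  intros [HG HD HN _] HA Hgrz. simpl in *.
  destruct (closure_sub_box _ _ HC A (HD _ HA)) as [HASub HgrzCl].
  assert (HboxG : incl (map Box (unbox G)) G)
    by (intros x (B & <- & HB)%in_map_iff; apply in_unbox, HB).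
  destruct (saturation (map Box (unbox G) ++ [Box (Imp A (Box A))]) [A])
    as (G' & D' & HGG' & HDD' & Hgood).
  - apply incl_app; [apply (incl_tran HboxG HG)|intros x [<-|[]]; assumption].
  - intros x [<-|[]]. assumption.
  - intros Hprem. apply HN, derivable_grz_in with (unbox G) A; assumption.
  - exists (G', D'). split; [assumption|split; [|apply HDD'; left; reflexivity]].
    right. split; [assumption|split]; simpl.
    + intros F HF. apply HGG', in_or_app. left. apply in_map, in_unbox, HF.
    + exists (Imp A (Box A)). split; [apply HGG', in_or_app; right; left; reflexivity|assumption].
Qed.

Lemma truth_lemma F w : good w ->
  (In F (fst w) -> sat canonical_rel canonical_val w F) /\
  (In F (snd w) -> ~ sat canonical_rel canonical_val w F).
Proof.
  revert w. induction F as [|p|A IHA B IHB|A IHA]; intros [G D] Hw;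
    pose proof Hw as [HG HD HN Hsat]; simpl in *.
  - split; [|tauto]. intros HBot. exfalso. apply HN, derivable_bot_in, HBot.
  - split; [auto|]. intros Hp Hp'. apply HN, derivable_init_in with (Atom p); assumption.
  - split.
    + intros HAB HA. destruct (saturated_impL _ _ Hsat A B HAB) as [HB|HA'].
      * apply (IHB _ Hw), HB.
      * exfalso. apply (proj2 (IHA _ Hw) HA' HA).
    + intros HAB Hs. destruct (saturated_impR _ _ Hsat A B HAB) as [HA HB].
      apply (proj2 (IHB _ Hw) HB), Hs, (IHA _ Hw), HA.
  - split.
    + intros HBA v [<-|(Hv & HGv & _)].
      * apply (IHA _ Hw), (saturated_refl _ _ Hsat), HBA.
      * apply (IHA _ Hv), (saturated_refl _ _ (good_saturated _ Hv)), HGv, HBA.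
    + intros HBA Hs. destruct (in_dec form_eq_dec (Box (Imp A (Box A))) G) as [Hgrz|Hgrz].
      * destruct (saturated_impL _ _ Hsat A (Box A) (saturated_refl _ _ Hsat _ Hgrz)) as [HBA'|HA].
        -- apply HN, derivable_init_in with (Box A); assumption.
        -- apply (proj2 (IHA _ Hw) HA), Hs. left. reflexivity.
      * destruct (grz_successor G D A Hw HBA Hgrz) as (v & Hv & HRv & HAv).
        apply (proj2 (IHA _ Hv) HAv), Hs, HRv.
Qed.

End Canonical.

Theorem GrzSeq_proves_of_valid G D : valid G D -> GrzSeq_proves G D.
Proof.
  intros Hv. apply NNPP. intros HN.
  pose proof (closure_of (G ++ D)) as HC. simpl in HC.
  set (Sub := flat_map subformulas (G ++ D)) in HC.
  set (Cl := Sub ++ flat_map grz_formulas Sub) in HC.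
  assert (HGD : incl (G ++ D) Sub)
    by (intros F HF; apply in_flat_map; exists F; auto using subformulas_refl).
  destruct (saturation Sub Cl HC G D) as (G' & D' & HGG' & HDD' & Hgood).
  - intros F HF. apply (closure_incl _ _ HC), HGD, in_or_app. auto.
  - intros F HF. apply HGD, in_or_app. auto.
  - assumption.
  - destruct (Hv _ _ canonical_val (canonical_frame Sub Cl) (G', D')) as (F & HF & HFw).
    + intros F HF. apply (truth_lemma Sub Cl HC F _ Hgood), HGG', HF.
    + apply (truth_lemma Sub Cl HC F _ Hgood); [apply HDD', HF|exact HFw].
Qed.

Theorem theorem2p2 : forall (G D : list form),
  GrzSeqCut_proves G D -> GrzSeq_proves G D.
Proof.
  intros G D H. apply GrzSeq_proves_of_valid, (derivable_valid true), H.
Qed.
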